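(* For every $n\geq1$, the number of $\mathcal{B}_n$-orbits of right $0/1$-triangles in $[0,1]^n$ equals $\left\lfloor\frac{n}{2}\right\rfloor\left\lceil\frac{n}{2}\right\rceil$.
   Context: A $0/1$-triangle in $[0,1]^n$ is the convex hull of three distinct points of $\{0,1\}^n$; it is right if one of its angles equals $\pi/2$. $\mathcal{B}_n$ is the hyperoctahedral group of symmetries of $[0,1]^n$, acting on $\{0,1\}^n$ by permuting coordinates and complementing a subset of coordinates; triangles are counted up to this action. *)

From mathcomp Require Import all_boot all_order all_algebra fingroup perm.
Set Implicit Arguments. Unset Strict Implicit. Unset Printing Implicit Defensive.
Import GRing.Theory Num.Theory.

Notation point n := {ffun 'I_n -> bool}.

(* The hyperoctahedral group B_n acts on {0,1}^n: a coordinate permutation s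
   followed by complementing the coordinates in c. *)
Definition bact (n : nat) (s : {perm 'I_n}) (c : {set 'I_n}) (x : point n)
  : point n := [ffun i => addb (x ((s^-1)%g i)) (i \in c)].

(* A 0/1-triangle: the convex hull of three distinct 0/1 points; since all
   points of {0,1}^n are vertices of the cube, it is determined by its
   (3-element) vertex set. *)
Definition is_triangle (n : nat) (T : {set point n}) : bool := #|T| == 3.

Definition dotv (n : nat) (v a b : point n) : int :=
  \sum_(i < n) (((a i : nat)%:Z - (v i : nat)%:Z) * ((b i : nat)%:Z - (v i : nat)%:Z))%R.

Definition right_at (n : nat) (v a b : point n) : bool := dotv v a b == 0%R.

Definition is_right (n : nat) (T : {set point n}) : bool :=
  [exists v in T, exists a in T, exists b in T,
     [&& a != v, b != v, a != b & right_at v a b]].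

Definition right_triangles (n : nat) : {set {set point n}} :=
  [set T : {set point n} | is_triangle T && is_right T].

Definition borbit (n : nat) (T : {set point n}) : {set {set point n}} :=
  [set bact s c @: T | s : {perm 'I_n}, c : {set 'I_n}].

(* At a right angle v of a triangle {v, a, b} the edges v a and v b have
   disjoint supports A and B (the coordinates where a, resp. b, differs from
   v). Complementing the coordinates where v is 1 and permuting coordinates so
   that A and B become consecutive blocks moves the triangle to the canonical
   one {0, 1_[0,p), 1_[p,p+q)} with p = |A| <= q = |B| and p + q <= n. The
   Hamming distances {p, q, p + q} between its vertices are an orbit invariant,
   so distinct pairs give distinct orbits, and the pairs 1 <= p <= q,
   p + q <= n are in bijection with a (n/2) x ((n+1)/2) rectangle. *)

From mathcomp Require Import all_boot all_order all_algebra fingroup perm.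
From mathcomp Require Import zify.
Set Implicit Arguments. Unset Strict Implicit. Unset Printing Implicit Defensive.

Lemma cards3_eq3 (T : finType) (x y z : T) :
  (#|[set x; y; z]| == 3) = [&& x != y, x != z & y != z].
Proof.
rewrite -setUA cardsU1 cards2 !inE negb_or.
by case: (x != y); case: (x != z); case: (y != z).
Qed.

Lemma cardsU_disjoint (T : finType) (A B : {set T}) :
  [disjoint A & B] -> #|A :|: B| = #|A| + #|B|.
Proof. by move=> AB; apply/eqP; rewrite (leq_card_setU A B). Qed.

Lemma count_interval a b m :
  count (fun i => a <= i < b) (iota 0 m) = minn b m - minn a m.
Proof.
elim: m => [|m IHm]; first by rewrite !minn0.
rewrite -addn1 iotaD count_cat IHm /= addn0; lia.
Qed.

Lemma card_interval n a b : b <= n -> #|[set i : 'I_n | a <= i < b]| = b - a.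
Proof.
move=> bn; rewrite cardsE cardE /enum_mem size_filter /=.
by rewrite -(count_map val (fun i => a <= i < b)) -enumT val_enum_ord count_interval; lia.
Qed.

Lemma nth_cat_all (T : eqType) (a : pred T) x0 s1 s2 j :
  all a s1 -> all (predC a) s2 -> j < size s1 + size s2 ->
  a (nth x0 (s1 ++ s2) j) = (j < size s1).
Proof.
move=> /allP a_s1 /allP a_s2 j_lt; rewrite nth_cat.
case: ltnP => j_s1; first by rewrite a_s1 ?mem_nth.
by apply/negbTE/(a_s2 _ (mem_nth _ _)); rewrite ltn_subLR.
Qed.

Section BlockPermutation.
Variable n : nat.

Lemma perm_of_uniq (L : seq 'I_n) :
  size L = n -> uniq L -> exists s : {perm 'I_n}, forall j, s j = nth j L j.
Proof.
move=> sizeL uniqL.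
have nth_inj : injective (fun j : 'I_n => nth j L j).
  move=> j k /= /eqP; rewrite (set_nth_default j k) ?sizeL //.
  by rewrite nth_uniq ?sizeL // => /eqP/val_inj.
by exists (perm nth_inj) => j; rewrite permE.
Qed.

Lemma perm_blocks (A B : {set 'I_n}) : [disjoint A & B] ->
  exists s : {perm 'I_n}, forall j,
    (s j \in A) = (j < #|A|) /\ (s j \in B) = (#|A| <= j < #|A| + #|B|).
Proof.
move=> AB; set C := ~: (A :|: B).
have sizes : #|A| + #|B| + #|C| = n.
  by rewrite -cardsU_disjoint // cardsC; exact: card_ord.
set L := enum A ++ enum B ++ enum C.
have sizeL : size L = n by rewrite !size_cat -!cardE addnA.
have uniqL : uniq L.
  apply: (leq_size_uniq (enum_uniq 'I_n)) => [x _|]; last by rewrite sizeL size_enum_ord.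
  by rewrite !mem_cat !mem_enum !inE; case: (x \in A); case: (x \in B).
have [s sE] := perm_of_uniq sizeL uniqL.
have inA j : (s j \in A) = (j < #|A|).
  rewrite sE cardE (nth_cat_all (a := fun x => x \in A)) //.
  - by apply/allP => x; rewrite mem_enum.
  - rewrite all_cat; apply/andP; split; apply/allP => x; rewrite mem_enum /=.
      by move=> /(disjointFl AB)->.
    by rewrite !inE negb_or => /andP[].
  - by rewrite size_cat -!cardE addnA sizes.
have inAB j : (s j \in A :|: B) = (j < #|A| + #|B|).
  rewrite sE /L catA (nth_cat_all (a := fun x => x \in A :|: B));
    rewrite ?size_cat -?cardE //.
  - rewrite all_cat; apply/andP; split; apply/allP => x;
      by rewrite mem_enum !inE => ->; rewrite ?orbT.
  - by apply/allP => x; rewrite mem_enum !inE.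
  - by rewrite sizes.
exists s => j; split; first exact: inA.
have := inAB j; rewrite inE inA; case: (ltnP j #|A|) => /= jA; last by [].
by rewrite (disjointFr AB) // inA.
Qed.

End BlockPermutation.

Section HyperoctahedralAction.
Variable n : nat.
Implicit Types (s : {perm 'I_n}) (c : {set 'I_n}) (x : point n) (T U W : {set point n}).

Lemma bact1 x : bact 1%g set0 x = x.
Proof. by apply/ffunP => i; rewrite ffunE invg1 perm1 inE addbF. Qed.

Lemma bact_comp s1 c1 s2 c2 x :
  bact s1 c1 (bact s2 c2 x) =
  bact (s2 * s1)%g [set i | (i \in c1) (+) ((s1^-1)%g i \in c2)] x.
Proof.
apply/ffunP => i; rewrite !ffunE inE invMg permM.
by rewrite -addbA [(i \in c1) (+) _]addbC.
Qed.

Lemma bactK s c : cancel (bact s c) (bact (s^-1)%g [set i | s i \in c]).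
Proof.
move=> x; apply/ffunP => i; rewrite !ffunE inE invgK permK.
by rewrite -addbA addbb addbF.
Qed.

Lemma bact_inj s c : injective (bact s c).
Proof. exact: can_inj (bactK s c). Qed.

Lemma mem_borbit s c T : bact s c @: T \in borbit T.
Proof. by apply/imset2P; exists s c. Qed.

Lemma borbit_refl T : T \in borbit T.
Proof. by rewrite -{1}(imset_id T) -(eq_imset _ bact1) mem_borbit. Qed.

Lemma borbit_trans T U W : U \in borbit T -> W \in borbit U -> W \in borbit T.
Proof.
move=> /imset2P[s c _ _ ->] /imset2P[s' c' _ _ ->].
by rewrite -imset_comp (eq_imset _ (bact_comp s' c' s c)) mem_borbit.
Qed.

Lemma borbit_sym T U : U \in borbit T -> T \in borbit U.
Proof.
move=> /imset2P[s c _ _ ->].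
by rewrite -{1}(imset_id T) -(eq_imset _ (bactK s c)) imset_comp mem_borbit.
Qed.

Lemma borbit_eq T U : U \in borbit T -> borbit U = borbit T.
Proof.
move=> UT; apply/setP => W; apply/idP/idP; first exact: borbit_trans.
exact: borbit_trans (borbit_sym UT).
Qed.

End HyperoctahedralAction.

Section HammingDistance.
Variable n : nat.
Implicit Types (s : {perm 'I_n}) (c : {set 'I_n}) (x y : point n) (T U : {set point n}).

Definition differ x y : {set 'I_n} := [set i | x i != y i].

Definition hamming x y := #|differ x y|.

Lemma differC x y : differ x y = differ y x.
Proof. by apply/setP => i; rewrite !inE eq_sym. Qed.

Lemma hammingC x y : hamming x y = hamming y x.
Proof. by rewrite /hamming differC. Qed.

Lemma hamming_eq0 x y : (hamming x y == 0) = (x == y).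
Proof.
rewrite cards_eq0; apply/eqP/eqP => [xy | ->]; last first.
  by apply/setP => i; rewrite !inE eqxx.
apply/ffunP => i; apply/eqP.
by have := in_set0 i; rewrite -xy inE => /negbFE.
Qed.

Lemma hamming_gt0 x y : (0 < hamming x y) = (x != y).
Proof. by rewrite lt0n hamming_eq0. Qed.

Lemma hamming_bact s c x y : hamming (bact s c x) (bact s c y) = hamming x y.
Proof.
rewrite /hamming -(card_preimset _ (@perm_inj _ s)).
apply: eq_card => i; rewrite !inE !ffunE permK.
by case: (s i \in c); rewrite ?addbF ?addbT ?(inj_eq negb_inj).
Qed.

Definition has_dist T d :=
  [exists x in T, exists y in T, (x != y) && (hamming x y == d)].

Lemma has_dist3 x y z d :
  has_dist [set x; y; z] d =
  [|| (x != y) && (hamming x y == d), (x != z) && (hamming x z == d)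
    | (y != z) && (hamming y z == d)].
Proof.
apply/exists_inP/idP => [[a + /exists_inP[b +]] | ].
  by rewrite !inE -!orbA => /or3P[]/eqP-> /or3P[]/eqP->;
     rewrite ?eqxx // => h; rewrite ?h ?orbT //;
     move: h; rewrite eq_sym hammingC => ->; rewrite ?orbT.
case/or3P=> h; [exists x | exists x | exists y]; rewrite ?inE ?eqxx ?orbT //;
  apply/exists_inP; [exists y | exists z | exists z]; by rewrite ?inE ?eqxx ?orbT.
Qed.

Lemma has_dist_bact s c T d : has_dist (bact s c @: T) d = has_dist T d.
Proof.
apply/idP/idP => [|/exists_inP[x xT /exists_inP[y yT xyd]]]; last first.
  apply/exists_inP; exists (bact s c x); first exact: imset_f.
  apply/exists_inP; exists (bact s c y); first exact: imset_f.
  by rewrite (inj_eq (@bact_inj _ s c)) hamming_bact.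
move=> /exists_inP[_ /imsetP[x xT ->] /exists_inP[_ /imsetP[y yT ->]]].
rewrite (inj_eq (@bact_inj _ s c)) hamming_bact => xyd.
by apply/exists_inP; exists x => //; apply/exists_inP; exists y.
Qed.

Lemma has_dist_borbit T U d : U \in borbit T -> has_dist U d = has_dist T d.
Proof. by move=> /imset2P[s c _ _ ->]; apply: has_dist_bact. Qed.

Lemma right_atE v a b : right_at v a b = [disjoint differ a v & differ b v].
Proof.
rewrite /right_at /dotv; set S := differ a v :&: differ b v.
rewrite (eq_bigr (fun i => Posz (if i \in S then 1 else 0))); last first.
  by move=> i _; rewrite !inE; case: (a i); case: (b i); case: (v i).
by rewrite -(big_morph Posz PoszD (erefl (Posz 0))) eqz_nat -big_mkcond sum1_card
  cards_eq0 setI_eq0.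
Qed.

End HammingDistance.

Section CanonicalTriangles.
Variable n : nat.

Definition indicator a b : point n := [ffun i : 'I_n => a <= i < b].

Lemma differ_indicator a b c : a <= b <= c ->
  differ (indicator a b) (indicator b c) = [set i : 'I_n | a <= i < c].
Proof.
move=> /andP[ab bc]; apply/setP => i; rewrite !inE !ffunE.
case: (ltnP i b) => ib; last by rewrite andbF (leq_trans ab ib); case: (i < c).
by rewrite (leq_trans ib bc) !andbT; case: (a <= i).
Qed.

Lemma hamming_indicator a b c : a <= b <= c -> c <= n ->
  hamming (indicator a b) (indicator b c) = c - a.
Proof. by move=> abc cn; rewrite /hamming differ_indicator // card_interval. Qed.

(* [indicator p p] is the origin, the vertex of the right angle. *)
Definition canon_triangle p q : {set point n} :=
  [set indicator p p; indicator 0 p; indicator p (p + q)].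

Section OneTriangle.
Variables p q : nat.
Hypotheses (p_gt0 : 0 < p) (q_gt0 : 0 < q) (pq_le_n : p + q <= n).

Let hamming_origin_p : hamming (indicator p p) (indicator 0 p) = p.
Proof. by rewrite hammingC hamming_indicator ?subn0 ?leqnn //; lia. Qed.

Let hamming_origin_q : hamming (indicator p p) (indicator p (p + q)) = q.
Proof. by rewrite hamming_indicator ?leqnn ?leq_addr // addKn. Qed.

Let hamming_p_q : hamming (indicator 0 p) (indicator p (p + q)) = p + q.
Proof. by rewrite hamming_indicator ?subn0 // leq_addr. Qed.

Lemma has_dist_canon_triangle d :
  has_dist (canon_triangle p q) d = [|| p == d, q == d | p + q == d].
Proof.
rewrite has_dist3 -!hamming_gt0 hamming_origin_p hamming_origin_q hamming_p_q.
by rewrite p_gt0 q_gt0 addn_gt0 p_gt0.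
Qed.

Lemma canon_triangle_right : canon_triangle p q \in right_triangles n.
Proof.
rewrite inE /is_triangle cards3_eq3 -!hamming_gt0.
rewrite hamming_origin_p hamming_origin_q hamming_p_q p_gt0 q_gt0 addn_gt0 p_gt0 /=.
apply/exists_inP; exists (indicator p p); first by rewrite !inE eqxx.
apply/exists_inP; exists (indicator 0 p); first by rewrite !inE eqxx orbT.
apply/exists_inP; exists (indicator p (p + q)); first by rewrite !inE eqxx orbT.
rewrite -!hamming_gt0 hammingC hamming_origin_p hammingC hamming_origin_q hamming_p_q.
rewrite p_gt0 q_gt0 addn_gt0 p_gt0 right_atE [differ (indicator p (p + q)) _]differC.
rewrite !differ_indicator ?leqnn ?leq_addr // -setI_eq0.
by apply/eqP/setP => i; rewrite !inE; lia.
Qed.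

End OneTriangle.

Lemma canon_triangle_borbit_inj p q p' q' :
    0 < p -> p <= q -> p + q <= n -> 0 < p' -> p' <= q' -> p' + q' <= n ->
  borbit (canon_triangle p q) = borbit (canon_triangle p' q') -> p = p' /\ q = q'.
Proof.
move=> p_gt0 pq pqn p'_gt0 p'q' p'q'n E.
have dists d : [|| p == d, q == d | p + q == d] = [|| p' == d, q' == d | p' + q' == d].
  rewrite -!has_dist_canon_triangle; try lia.
  by rewrite (has_dist_borbit _ (_ : _ \in borbit (canon_triangle p q))) // E borbit_refl.
move: (dists p) (dists (p + q)) (dists (p' + q')); rewrite !eqxx !orbT.
by move=> /esym/or3P[]/eqP h1 /esym/or3P[]/eqP h2 /or3P[]/eqP h3; lia.
Qed.

End CanonicalTriangles.

Arguments indicator {n} a b.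

Section Classification.
Variable n : nat.
Implicit Types (v a b : point n) (T : {set point n}).

Lemma bact_indicator (s : {perm 'I_n}) v a lo hi :
    (forall i, (lo <= (s^-1)%g i < hi) = (i \in differ a v)) ->
  bact s [set i | v i] (indicator lo hi) = a.
Proof.
move=> sA; apply/ffunP => i; rewrite !ffunE sA !inE.
by case: (a i); case: (v i).
Qed.

Lemma right_corner_mem_borbit v a b :
    right_at v a b ->
  [set v; a; b] \in borbit (canon_triangle n (hamming a v) (hamming b v)).
Proof.
rewrite right_atE => AB; have [s sAB] := perm_blocks AB.
set A := differ a v; set B := differ b v.
have sA i : (0 <= (s^-1)%g i < #|A|) = (i \in A).
  by have [<- _] := sAB ((s^-1)%g i); rewrite permKV.
have sB i : (#|A| <= (s^-1)%g i < #|A| + #|B|) = (i \in B).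
  by have [_ <-] := sAB ((s^-1)%g i); rewrite permKV.
have sV i : (#|A| <= (s^-1)%g i < #|A|) = (i \in differ v v).
  by rewrite !inE eqxx; lia.
suff -> : [set v; a; b] = bact s [set i | v i] @: canon_triangle n #|A| #|B|.
  exact: mem_borbit.
rewrite /canon_triangle imsetU imsetU1 !imset_set1.
by rewrite (bact_indicator sV) (bact_indicator sA) (bact_indicator sB).
Qed.

Lemma mem_right_triangle_orbits O :
  O \in [set borbit T | T in right_triangles n] <->
  exists p q, [/\ 0 < p, p <= q, p + q <= n & O = borbit (canon_triangle n p q)].
Proof.
split=> [/imsetP[T] | [p [q [p_gt0 pq pqn ->]]]]; last first.
  apply/imsetP; exists (canon_triangle n p q) => //.
  by apply: canon_triangle_right => //; lia.
rewrite inE => /andP[/eqP T3 /exists_inP[v vT /exists_inP[a aT /exists_inP[b bT]]]].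
move=> /and4P[av bv ab vab] ->.
have -> : T = [set v; a; b].
  have /eqP vab3 : #|[set v; a; b]| == 3 by rewrite cards3_eq3 !(eq_sym v) av bv ab.
  apply/eqP; rewrite eq_sym eqEcard T3 vab3 leqnn andbT.
  by rewrite !subUset !sub1set vT aT bT.
wlog le_ab : a b av bv ab vab {aT bT} / hamming a v <= hamming b v.
  move=> wlog; case: (leqP (hamming a v) (hamming b v)); first exact: wlog.
  move=> /ltnW le_ba; rewrite setUAC; apply: wlog => //; first by rewrite eq_sym.
  by rewrite right_atE disjoint_sym -right_atE.
exists (hamming a v), (hamming b v); split; rewrite ?hamming_gt0 //.
  rewrite /hamming -cardsU_disjoint -?right_atE //.
  by apply: leq_trans (max_card _) _; rewrite card_ord.
exact/borbit_eq/right_corner_mem_borbit.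
Qed.

End Classification.

Section CanonicalPairs.
Variable n : nat.

(* Cells with i <= j give the pairs with q <= (n + 1) %/ 2; the remaining
   cells, reflected, give those with q > (n + 1) %/ 2. *)
Definition pair_of_cell (i j : nat) : nat * nat :=
  if i <= j then (i.+1, j.+1) else (j.+1, (n + 1) %/ 2 + i - j).

Lemma pair_of_cell_canonical i j : i < n %/ 2 -> j < (n + 1) %/ 2 ->
  let: (p, q) := pair_of_cell i j in [/\ 0 < p, p <= q & p + q <= n].
Proof. by move=> ik jl; rewrite /pair_of_cell; case: leqP => ij; split; lia. Qed.

Lemma pair_of_cell_inj i j i' j' :
  i < n %/ 2 -> j < (n + 1) %/ 2 -> i' < n %/ 2 -> j' < (n + 1) %/ 2 ->
  pair_of_cell i j = pair_of_cell i' j' -> i = i' /\ j = j'.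
Proof.
move=> ik jl i'k j'l; rewrite /pair_of_cell.
by case: (leqP i j); case: (leqP i' j') => ? ? [] ? ?; lia.
Qed.

Lemma pair_of_cell_onto p q : 0 < p -> p <= q -> p + q <= n ->
  exists i j, [/\ i < n %/ 2, j < (n + 1) %/ 2 & pair_of_cell i j = (p, q)].
Proof.
rewrite /pair_of_cell => p_gt0 pq pqn.
case: (leqP q ((n + 1) %/ 2)) => ql.
  by exists p.-1, q.-1; case: (leqP p.-1 q.-1); split; try congr pair; lia.
exists (q - (n + 1) %/ 2 + p.-1), p.-1.
by case: (leqP (q - (n + 1) %/ 2 + p.-1) p.-1); split; try congr pair; lia.
Qed.

End CanonicalPairs.

Definition canon_orbit n (ij : 'I_(n %/ 2) * 'I_((n + 1) %/ 2)) :=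
  let: (p, q) := pair_of_cell n ij.1 ij.2 in borbit (canon_triangle n p q).

Lemma canon_orbit_inj n : injective (@canon_orbit n).
Proof.
move=> [i j] [i' j']; rewrite /canon_orbit /=.
have := pair_of_cell_canonical (ltn_ord i) (ltn_ord j).
have := pair_of_cell_canonical (ltn_ord i') (ltn_ord j').
case E': (pair_of_cell n i' j') => [p' q']; case E: (pair_of_cell n i j) => [p q].
move=> [p'_gt0 p'q' p'q'n] [p_gt0 pq pqn] /canon_triangle_borbit_inj[] // pp' qq'.
rewrite -pp' -qq' -E in E'.
have [ii' jj'] :=
  pair_of_cell_inj (ltn_ord i) (ltn_ord j) (ltn_ord i') (ltn_ord j') (esym E').
by rewrite (val_inj ii') (val_inj jj').
Qed.

Lemma right_triangle_orbitsE n :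
  [set borbit T | T in right_triangles n] = [set canon_orbit ij | ij in setT].
Proof.
apply/setP => O; apply/idP/imsetP => [|[[i j] _ ->]].
  case/mem_right_triangle_orbits => p [q [p_gt0 pq pqn ->]].
  have [i [j [ik jl E]]] := pair_of_cell_onto p_gt0 pq pqn.
  by exists (Ordinal ik, Ordinal jl); rewrite ?inE // /canon_orbit /= E.
apply/mem_right_triangle_orbits; rewrite /canon_orbit /=.
have := pair_of_cell_canonical (ltn_ord i) (ltn_ord j).
by case: pair_of_cell => p q [p_gt0 pq pqn]; exists p, q.
Qed.

Theorem corollary4p19 (n : nat) :
  1 <= n ->
  #|[set borbit T | T in right_triangles n]| = (n %/ 2) * ((n + 1) %/ 2).
Proof.
(* The count is also right for n = 0. *)
move=> _.
rewrite right_triangle_orbitsE card_imset ?cardsT ?card_prod ?card_ord //.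
exact: canon_orbit_inj.
Qed.
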